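(* Let $G$ and $H$ be graphs with $i_G$ and $i_H$ isolated vertices, respectively. Then $$\rho_o(G\boxtimes H)\geq\rho(G^-)\rho(H^-)+i_G\rho_o(H)+i_H\rho_o(G)-i_Gi_H$$ and $$\rho_o(G\boxtimes H)\leq \min\{\rho(G^-)\gamma_f(H^-),\ \rho(H^-)\gamma_f(G^-)\}+i_G\rho_o(H)+i_H\rho_o(G)-i_Gi_H.$$
   Context: All graphs are finite and simple. $G^-$ denotes the graph obtained from $G$ by deleting all isolated vertices. A packing of $G$ is a set $P\subseteq V(G)$ with $N[u]\cap N[v]=\emptyset$ for all distinct $u,v\in P$ ($N[\cdot]$ the closed neighborhood); $\rho(G)$ is the maximum size of a packing. An open packing is a set whose vertices have pairwise disjoint open neighborhoods; $\rho_o(G)$ is its maximum size. The fractional domination number $\gamma_f(G)$ is the minimum of $\sum_{v\in V(G)} f(v)$ over all functions $f:V(G)\to[0,1]$ with $\sum_{u\in N[v]}f(u)\ge 1$ for every $v\in V(G)$ (taken to be $0$ for the empty graph). The strong product $G\boxtimes H$ has vertex set $V(G)\times V(H)$, where distinct $(g,h),(g',h')$ are adjacent iff ($g=g'$ or $gg'\in E(G)$) and ($h=h'$ or $hh'\in E(H)$). *)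

From HB Require Import structures.
From mathcomp Require Import all_boot all_order all_algebra.
From Stdlib Require Import ClassicalEpsilon.
Set Implicit Arguments. Unset Strict Implicit. Unset Printing Implicit Defensive.
Import Order.TTheory GRing.Theory Num.Theory.

(* A finite simple graph is a relation [e : rel T] on a finType [T],
   assumed symmetric and irreflexive in the theorem statement. *)

Section Graphs.
Variable T : finType.
Variable e : rel T.

Definition onbhd (v : T) : {set T} := [set u | e v u].
Definition cnbhd (v : T) : {set T} := v |: onbhd v.

Definition is_packing (P : {set T}) : bool :=
  [forall u in P, forall v in P, (u != v) ==> [disjoint cnbhd u & cnbhd v]].
Definition is_open_packing (P : {set T}) : bool :=
  [forall u in P, forall v in P, (u != v) ==> [disjoint onbhd u & onbhd v]].

Definition rho : nat := \max_(P : {set T} | is_packing P) #|P|.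
Definition rho_o : nat := \max_(P : {set T} | is_open_packing P) #|P|.

Definition nonisolated (v : T) : bool := [exists u, e v u].
Definition num_isolated : nat := #|[set v | ~~ nonisolated v]|.

Definition frac_dominating (R : realFieldType) (f : T -> R) : Prop :=
  (forall v, 0 <= f v <= 1)%R /\ (forall v, (1 <= \sum_(u in cnbhd v) f u)%R).

Definition is_gamma_f (R : realFieldType) (r : R) : Prop :=
  (exists f : T -> R, frac_dominating f /\ (\sum_(v : T) f v)%R = r) /\
  (forall f : T -> R, frac_dominating f -> (r <= \sum_(v : T) f v)%R).

(* the minimum value (it exists: the LP is feasible and bounded);
   for the empty graph this is 0 automatically. *)
Definition gamma_f (R : realFieldType) : R :=
  epsilon (inhabits 0%R) (@is_gamma_f R).

End Graphs.

Definition minus_vert (T : finType) (e : rel T) : finType :=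
  {v : T | nonisolated e v}.
Definition minus_rel (T : finType) (e : rel T) : rel (minus_vert e) :=
  fun x y => e (val x) (val y).

Definition strong_prod (T U : finType) (g : rel T) (h : rel U) : rel (T * U) :=
  fun x y => [&& x != y, (x.1 == y.1) || g x.1 y.1 & (x.2 == y.2) || h x.2 y.2].
Arguments minus_vert {T} e.
Arguments minus_rel {T} e _ _.
Arguments gamma_f {T} e R.
Arguments rho {T} e.
Arguments rho_o {T} e.
Arguments num_isolated {T} e.

(* Closed neighbourhoods in G x H (strong product) are products of closed
   neighbourhoods.  Hence the product P x Q of maximum packings of G^- and H^- is an
   open packing, and so are the pairs with an isolated coordinate taken from maximum
   open packings of G and H (which contain all isolated vertices); together they give
   the lower bound.

   For the upper bound, split a maximum open packing S of G x H according to which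
   coordinates are isolated.  Pairs with an isolated first (second) coordinate lie in
   fibres that are open packings of H (of G).  For the pairs with no isolated
   coordinate, two of them whose first coordinates have a common closed neighbour and
   whose second coordinates have a common closed neighbour y would have a common open
   neighbour; so for each y the first coordinates of the s with y in N[s.2] form a
   packing of G^-.  Double counting against any fractional dominating function f of
   H^- then gives |S| <= rho(G^-) * sum f.  Since [gamma_f] is defined by Hilbert's
   epsilon, this requires the optimum of the domination LP to be attained, which is
   shown by Fourier-Motzkin elimination. *)

From mathcomp Require Import all_boot all_order all_algebra.
From mathcomp Require Import ring lra zify.
From Stdlib Require Import ClassicalEpsilon.
Set Implicit Arguments. Unset Strict Implicit. Unset Printing Implicit Defensive.
Import Order.TTheory GRing.Theory Num.Theory.

Lemma disjoint_memP (T : finType) (A B : {set T}) :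
  reflect (forall z, z \in A -> z \in B -> False) [disjoint A & B].
Proof.
apply: (iffP pred0P) => [AB z zA zB | AB z /=]; first by have := AB z; rewrite /= zA zB.
by apply/negbTE/andP => -[/AB].
Qed.

Lemma disjoint_setXl (T U : finType) (A1 A2 : {set T}) (B1 B2 : {set U}) :
  [disjoint A1 & A2] -> [disjoint setX A1 B1 & setX A2 B2].
Proof.
move=> /disjoint_memP A12; apply/disjoint_memP => -[x y].
by rewrite !in_setX => /andP [xA1 _] /andP [xA2 _]; apply: A12 xA2.
Qed.

Lemma disjoint_setXr (T U : finType) (A1 A2 : {set T}) (B1 B2 : {set U}) :
  [disjoint B1 & B2] -> [disjoint setX A1 B1 & setX A2 B2].
Proof.
move=> /disjoint_memP B12; apply/disjoint_memP => -[x y].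
by rewrite !in_setX => /andP [_ yB1] /andP [_ yB2]; apply: B12 yB2.
Qed.

Lemma card_fibres (aT rT : finType) (f : aT -> rT) (S : {set aT}) (A : {set rT}) :
  #|[set s in S | f s \in A]| = (\sum_(x in A) #|[set s in S | f s == x]|)%N.
Proof.
rewrite -sum1_card (partition_big f (mem A)) => [|s]; last by rewrite inE => /andP [].
apply: eq_bigr => x xA; rewrite sum1dep_card; apply: eq_card => s; rewrite !inE.
by case: (f s =P x) => [-> | _]; rewrite ?andbF // (xA : x \in A) andbT.
Qed.

Section Neighbourhoods.
Variables (T : finType) (e : rel T).

Definition isolated_vertices : {set T} := [set v | ~~ nonisolated e v].

Lemma card_isolated_vertices : #|isolated_vertices| = num_isolated e.
Proof. by []. Qed.

Lemma in_onbhd x y : (y \in onbhd e x) = e x y.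
Proof. by rewrite inE. Qed.

Lemma in_cnbhd x y : (y \in cnbhd e x) = (y == x) || e x y.
Proof. by rewrite /cnbhd in_setU1 in_onbhd. Qed.

Lemma cnbhd_id x : x \in cnbhd e x.
Proof. by rewrite in_cnbhd eqxx. Qed.

Lemma onbhd_sub_cnbhd x : onbhd e x \subset cnbhd e x.
Proof. exact: subsetU1. Qed.

Lemma nonisolatedW x y : e x y -> nonisolated e x.
Proof. by move=> xy; apply/existsP; exists y. Qed.

Lemma isolated_adjF x y : ~~ nonisolated e x -> e x y = false.
Proof. by move=> ix; apply: contraNF ix; apply: nonisolatedW. Qed.

Lemma cnbhd_isolated x : ~~ nonisolated e x -> cnbhd e x = [set x].
Proof. by move=> ix; apply/setP => y; rewrite in_cnbhd isolated_adjF ?orbF ?inE. Qed.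

Lemma is_packingP (P : {set T}) :
  reflect {in P &, forall u v, u != v -> [disjoint cnbhd e u & cnbhd e v]}
          (is_packing e P).
Proof.
apply: (iffP forallP) => [PP u v uP vP | PP u].
  by have /implyP /(_ uP) /forallP /(_ v) /implyP /(_ vP) /implyP := PP u.
by apply/implyP => uP; apply/forallP => v; apply/implyP => vP; apply/implyP; apply: PP.
Qed.

Lemma is_open_packingP (P : {set T}) :
  reflect {in P &, forall u v, u != v -> [disjoint onbhd e u & onbhd e v]}
          (is_open_packing e P).
Proof.
apply: (iffP forallP) => [PP u v uP vP | PP u].
  by have /implyP /(_ uP) /forallP /(_ v) /implyP /(_ vP) /implyP := PP u.
by apply/implyP => uP; apply/forallP => v; apply/implyP => vP; apply/implyP; apply: PP.
Qed.

Lemma open_packingS (A B : {set T}) :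
  A \subset B -> is_open_packing e B -> is_open_packing e A.
Proof.
move=> /subsetP AB /is_open_packingP PB; apply/is_open_packingP => u v uA vA.
exact: PB (AB _ uA) (AB _ vA).
Qed.

Lemma open_packingU (A B : {set T}) :
  is_open_packing e A -> is_open_packing e B ->
  {in A & B, forall u v, [disjoint onbhd e u & onbhd e v]} ->
  is_open_packing e (A :|: B).
Proof.
move=> /is_open_packingP PA /is_open_packingP PB AB; apply/is_open_packingP => u v.
rewrite !inE => /orP [uA | uB] /orP [vA | vB] uv.
- exact: PA.
- exact: AB.
- by rewrite disjoint_sym; apply: AB.
- exact: PB.
Qed.

Lemma open_packingU_isolated (A : {set T}) :
  is_open_packing e A -> is_open_packing e (A :|: isolated_vertices).
Proof.
move=> /is_open_packingP PA; apply/is_open_packingP => u v; rewrite !inE.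
case/orP => [uA | iu]; case/orP => [vA | iv] uv; first exact: PA.
all: apply/disjoint_memP => z; rewrite !in_onbhd.
all: by [rewrite (isolated_adjF z iu) | rewrite (isolated_adjF z iv)].
Qed.

Lemma leq_rho (P : {set T}) : is_packing e P -> (#|P| <= rho e)%N.
Proof. exact: leq_bigmax_cond. Qed.

Lemma leq_rho_o (P : {set T}) : is_open_packing e P -> (#|P| <= rho_o e)%N.
Proof. exact: leq_bigmax_cond. Qed.

Lemma rho_o_witness :
  exists P, [/\ is_open_packing e P, isolated_vertices \subset P & #|P| = rho_o e].
Proof.
have : (0 < #|is_open_packing e|)%N.
  by apply/card_gt0P; exists set0; apply/is_open_packingP => u; rewrite inE.
case/(eq_bigmax_cond (fun P : {set T} => #|P|)) => Q QP rhoQ.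
exists (Q :|: isolated_vertices); split; [exact: open_packingU_isolated | exact: subsetUr |].
apply/eqP; rewrite eqn_leq leq_rho_o ?open_packingU_isolated //.
by rewrite /rho_o rhoQ subset_leq_card ?subsetUl.
Qed.

Lemma rho_witness : exists2 P, is_packing e P & #|P| = rho e.
Proof.
have : (0 < #|is_packing e|)%N.
  by apply/card_gt0P; exists set0; apply/is_packingP => u; rewrite inE.
by case/(eq_bigmax_cond (fun P : {set T} => #|P|)) => P PP rhoP; exists P.
Qed.

End Neighbourhoods.

Section MinusGraph.
Variables (T : finType) (e : rel T).

Lemma leq_rho_minus (A : {set T}) :
  {in A, forall x, nonisolated e x} -> is_packing e A -> (#|A| <= rho (minus_rel e))%N.
Proof.
move=> An /is_packingP PA.
pose A' := [set x : minus_vert e | val x \in A].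
have -> : A = val @: A'.
  apply/setP => z; apply/idP/imsetP => [zA | [x]]; last by rewrite inE => xA ->.
  by exists (exist _ z (An z zA)); rewrite ?inE.
rewrite card_imset; last exact: val_inj.
apply/leq_rho/is_packingP => x y; rewrite !inE => xA yA xy.
apply/disjoint_memP => z; rewrite !in_cnbhd -!val_eqE => zx zy.
have xy' : val x != val y by rewrite val_eqE.
by have /disjoint_memP/(_ (val z)) := PA _ _ xA yA xy'; apply; rewrite in_cnbhd.
Qed.

Hypothesis esym : symmetric e.

Lemma packing_val (P : {set minus_vert e}) :
  is_packing (minus_rel e) P -> is_packing e (val @: P).
Proof.
move=> /is_packingP PP; apply/is_packingP => _ _ /imsetP [x xP ->] /imsetP [y yP ->] xy.
apply/disjoint_memP => z zx zy.
have nz : nonisolated e z.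
  move: zx; rewrite in_cnbhd => /orP [/eqP -> | ]; first exact: valP.
  by rewrite esym => /nonisolatedW.
have xy' : x != y by apply: contraNneq xy => ->.
have /disjoint_memP/(_ (exist _ z nz)) := PP _ _ xP yP xy'.
by apply; rewrite in_cnbhd -val_eqE /= -in_cnbhd.
Qed.

Lemma rho_minus_witness :
  exists P, [/\ is_packing e P, {in P, forall x, nonisolated e x} & #|P| = rho (minus_rel e)].
Proof.
have [P PP <-] := rho_witness (minus_rel e).
exists (val @: P); split; first exact: packing_val.
  by move=> _ /imsetP [x _ ->]; exact: valP.
by rewrite card_imset //; exact: val_inj.
Qed.

End MinusGraph.

(** * Attainment of the fractional domination number *)

Section RealLine.
Variable R : realFieldType.
Local Open Scope ring_scope.

Lemma exists_between (lo hi : seq R) :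
  {in lo & hi, forall a b, a <= b} ->
  exists t, {in lo, forall a, a <= t} /\ {in hi, forall b, t <= b}.
Proof.
move=> lohi; exists (\big[Num.max/(\big[Num.min/0]_(b <- hi) b)]_(a <- lo) a).
split=> [a al | b bh]; first exact: le_bigmax_seq.
rewrite big_seq; apply: bigmax_le => [|a al]; first exact: ge_bigmin_seq.
exact: lohi.
Qed.

Lemma halfline_min (L : seq (R * R)) (t0 lb : R) :
  let feasible t := all (fun c => c.2 <= c.1 * t) L in
  feasible t0 -> (forall t, feasible t -> lb <= t) ->
  exists t, feasible t /\ forall t', feasible t' -> t <= t'.
Proof.
move=> feasible /allP Ft0 Hlb.
have bound t c : feasible t -> c \in L -> 0 < c.1 -> c.2 / c.1 <= t.
  by move=> /allP Ft cL c1; rewrite ler_pdivrMr // mulrC; apply: Ft.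
pose tmin := \big[Num.max/Num.min t0 lb]_(c <- L | 0 < c.1) (c.2 / c.1).
have tmin_le t : feasible t -> lb <= t -> tmin <= t.
  move=> Ft lbt; rewrite /tmin big_seq_cond; apply: bigmax_le => [|c /andP [cL c1]].
    by rewrite ge_min lbt orbT.
  exact: bound.
exists tmin; split=> [|t' Ft']; last by apply: tmin_le => //; apply: Hlb.
apply/allP => c cL; have [c1 | c1] := ltP 0 c.1.
  by rewrite mulrC -ler_pdivrMr //; exact: (le_bigmax_seq _ c _ (fun c : R * R => c.2 / c.1) cL c1).
apply: le_trans (Ft0 _ cL) _; apply: ler_wnM2l => //.
rewrite /tmin big_seq_cond; apply: bigmax_le => [|c' /andP [c'L c'1]].
  by rewrite ge_min lexx.
exact: bound (introT allP Ft0) c'L c'1.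
Qed.

End RealLine.

Section FourierMotzkin.
Variables (R : realFieldType) (I : finType).
Local Notation constraint := ({ffun I -> R} * R)%type.
Local Open Scope ring_scope.

Definition cval (c : constraint) (x : I -> R) : R := \sum_i c.1 i * x i.

Definition satisfies (x : I -> R) (c : constraint) : bool := c.2 <= cval c x.

Lemma eq_cval c x y : x =1 y -> cval c x = cval c y.
Proof. by move=> xy; apply: eq_bigr => i _; rewrite xy. Qed.

(* For [0 < p.1 v] and [n.1 v < 0] this positive combination eliminates the variable [v]. *)
Definition fm_combine (v : I) (p n : constraint) : constraint :=
  ([ffun i => - n.1 v * p.1 i + p.1 v * n.1 i], - n.1 v * p.2 + p.1 v * n.2).

Definition fm_elim (v : I) (L : seq constraint) : seq constraint :=
  [seq c : constraint <- L | c.1 v == 0] ++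
  [seq fm_combine v p n | p <- [seq c : constraint <- L | 0 < c.1 v], n <- [seq c : constraint <- L | c.1 v < 0]].

Definition update (x : I -> R) (v : I) (t : R) : I -> R :=
  fun i => if i == v then t else x i.

Lemma cval_combine v p n x :
  cval (fm_combine v p n) x = - n.1 v * cval p x + p.1 v * cval n x.
Proof.
rewrite /cval !mulr_sumr -big_split; apply: eq_bigr => i _; rewrite ffunE /=; ring.
Qed.

Lemma cval_update c x v t : cval c (update x v t) = cval c x + c.1 v * (t - x v).
Proof.
rewrite /cval (bigD1 v) //= [\sum_i _](bigD1 v) //= /update eqxx.
rewrite (eq_bigr (fun i => c.1 i * x i)); last by move=> i /negbTE ->.
ring.
Qed.

Lemma fm_elim_sound v L x : all (satisfies x) L -> all (satisfies x) (fm_elim v L).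
Proof.
move=> /allP HL; apply/allP => c; rewrite mem_cat => /orP [|].
  by rewrite mem_filter => /andP [_ /HL].
case/allpairsP => -[p n] /= [+ + ->]; rewrite !mem_filter => /andP [pv /HL Hp] /andP [nv /HL Hn].
rewrite /satisfies cval_combine /=; apply: lerD.
  by apply: ler_wpM2l => //; rewrite oppr_ge0 ltW.
by apply: ler_wpM2l => //; rewrite ltW.
Qed.

Lemma fm_elim_complete v L x :
  all (satisfies x) (fm_elim v L) -> exists t, all (satisfies (update x v t)) L.
Proof.
move=> /allP H.
pose q c := (c.2 - cval c x) / c.1 v.
have [d [lo hi]] : exists d, {in [seq q c | c : constraint <- L & 0 < c.1 v], forall a, a <= d} /\
                             {in [seq q c | c : constraint <- L & c.1 v < 0], forall b, d <= b}.
  apply: exists_between => _ _ /mapP [p pP ->] /mapP [n nN ->].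
  have : satisfies x (fm_combine v p n).
    by apply: H; rewrite mem_cat; apply/orP; right; apply/allpairsP; exists (p, n).
  move: pP nN; rewrite !mem_filter => /andP [pv _] /andP [nv _].
  rewrite /satisfies cval_combine /= => Hc.
  have Ep : p.2 - cval p x = q p * p.1 v by rewrite /q divfK ?gt_eqF.
  have En : n.2 - cval n x = q n * n.1 v by rewrite /q divfK ?lt_eqF.
  have pn : 0 < p.1 v * - n.1 v by rewrite mulr_gt0 // oppr_gt0.
  rewrite -subr_le0 -(pmulr_rle0 _ pn).
  have -> : p.1 v * - n.1 v * (q p - q n) = - n.1 v * (q p * p.1 v) + p.1 v * (q n * n.1 v).
    by ring.
  rewrite -Ep -En; lra.
exists (d + x v); apply/allP => c cL; rewrite /satisfies cval_update addrK.
have qE : c.1 v != 0 -> q c * c.1 v = c.2 - cval c x by move=> c0; rewrite /q divfK.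
have [cn | cp | c0] := ltgtP (c.1 v) 0.
- have : d <= q c by apply: hi; apply/mapP; exists c; rewrite ?mem_filter ?cn.
  move=> /(ler_wnM2r (ltW cn)); rewrite qE ?lt_eqF //; lra.
- have : q c <= d by apply: lo; apply/mapP; exists c; rewrite ?mem_filter ?cp.
  move=> /(ler_wpM2r (ltW cp)); rewrite qE ?gt_eqF //; lra.
have : satisfies x c by apply: H; rewrite mem_cat mem_filter c0 eqxx cL.
by rewrite /satisfies c0 mul0r addr0.
Qed.

Definition fm_elim_seq (vs : seq I) (L : seq constraint) : seq constraint :=
  foldr fm_elim L vs.

Lemma fm_elim_seq_sound vs L x :
  all (satisfies x) L -> all (satisfies x) (fm_elim_seq vs L).
Proof. by elim: vs => //= v vs IH /IH; apply: fm_elim_sound. Qed.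

Lemma fm_elim_seq_complete vs L x :
  all (satisfies x) (fm_elim_seq vs L) ->
  exists2 y, all (satisfies y) L & forall i, i \notin vs -> y i = x i.
Proof.
elim: vs x => [|v vs IH] x /=; first by exists x.
move=> /fm_elim_complete [t /IH [y Ly yE]]; exists y => // i.
by rewrite inE negb_or => /andP [iv ivs]; rewrite yE // /update (negbTE iv).
Qed.

Lemma fm_elim_seq_coef vs L c w : c \in fm_elim_seq vs L -> w \in vs -> c.1 w = 0.
Proof.
elim: vs c => [|v vs IH] c //=; rewrite mem_cat => /orP [|].
  by rewrite mem_filter inE => /andP [/eqP cv cL] /orP [/eqP -> // | /(IH _ cL)].
case/allpairsP => -[p n] /= [+ + ->]; rewrite !mem_filter => /andP [_ pL] /andP [_ nL].
rewrite ffunE inE => /orP [/eqP -> | wvs] /=; first by ring.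
by rewrite (IH _ pL wvs) (IH _ nL wvs); ring.
Qed.

End FourierMotzkin.

Lemma big_unit (R : Type) (idx : R) (op : Monoid.law idx) (F : unit -> R) :
  \big[op/idx]_(i : unit) F i = F tt.
Proof. by rewrite (big_pred1 tt) // => -[]. Qed.

Section LinearProgramming.
Variables (R : realFieldType) (V : finType).
Local Notation constraint := ({ffun V -> R} * R)%type.
Local Notation constraint' := ({ffun (V + unit) -> R} * R)%type.
Local Open Scope ring_scope.

(* The objective value becomes the extra coordinate [inr tt]. *)
Definition extend (x : V -> R) (t : R) : V + unit -> R :=
  fun i => if i is inl v then x v else t.

Definition lift_constraint (c : constraint) : constraint' :=
  ([ffun i => if i is inl v then c.1 v else 0], c.2).

Lemma cval_lift c x t : cval (lift_constraint c) (extend x t) = cval c x.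
Proof.
rewrite /cval big_sumType /= big_unit ffunE mul0r addr0.
by apply: eq_bigr => v _; rewrite ffunE.
Qed.

Definition objective_rows (c : V -> R) : seq constraint' :=
  [:: ([ffun i => if i is inl v then c v else -1], 0);
      ([ffun i => if i is inl v then - c v else 1], 0)].

Lemma satisfies_objective c x t :
  all (satisfies (extend x t)) (objective_rows c) = (t == \sum_v c v * x v).
Proof.
rewrite /= andbT /satisfies /cval !big_sumType /= !big_unit !ffunE /=.
under eq_bigr do rewrite ffunE; under [X in _ && (_ <= X + _)]eq_bigr do rewrite ffunE.
under [X in _ && (0 <= X + _)]eq_bigr do rewrite mulNr.
by rewrite mulN1r mul1r sumrN subr_ge0 addrC subr_ge0 eq_le.
Qed.

Lemma objective_values (L : seq constraint) (c : V -> R) :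
  exists L1 : seq (R * R), forall t,
    (exists2 x, all (satisfies x) L & \sum_v c v * x v = t) <->
    all (fun a => a.2 <= a.1 * t) L1.
Proof.
pose vs := [seq inl v : V + unit | v <- enum V].
pose L' := fm_elim_seq vs (objective_rows c ++ map lift_constraint L).
have satL' y a : a \in L' -> satisfies y a = (a.2 <= a.1 (inr tt) * y (inr tt)).
  move=> aL; rewrite /satisfies /cval big_sumType /= big_unit big1 ?add0r // => v _.
  by rewrite (fm_elim_seq_coef aL) ?mul0r // map_f ?mem_enum.
have satL2 x t : all (satisfies (extend x t)) (objective_rows c ++ map lift_constraint L) =
    (t == \sum_v c v * x v) && all (satisfies x) L.
  rewrite all_cat satisfies_objective all_map; congr (_ && _).
  by apply: eq_all => a; rewrite /= /satisfies cval_lift.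
exists [seq (a.1 (inr tt), a.2) | a : constraint' <- L'] => t; rewrite all_map; split.
  move=> [x Lx xt].
  have /(fm_elim_seq_sound vs) /allP LL' :
    all (satisfies (extend x t)) (objective_rows c ++ map lift_constraint L).
    by rewrite satL2 xt eqxx Lx.
  apply/allP => a aL'.
  by have := LL' _ aL'; rewrite satL'.
move=> /allP Ht.
have /fm_elim_seq_complete [y Ly yt] : all (satisfies (extend (fun=> 0) t)) L'.
  by apply/allP => a aL'; rewrite satL' //; apply: Ht.
have {}yt : y (inr tt) = t by apply: yt; apply/mapP => -[].
have yE : y =1 extend (fun v => y (inl v)) t by case=> [v | []].
move: Ly; rewrite (eq_all (a2 := satisfies (extend (fun v => y (inl v)) t))) => [|a].
  by rewrite satL2 => /andP [/eqP tE Ly]; exists (fun v => y (inl v)).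
by rewrite /satisfies (eq_cval _ yE).
Qed.

Lemma lp_min (L : seq constraint) (c : V -> R) (lb : R) :
  (exists x, all (satisfies x) L) ->
  (forall x, all (satisfies x) L -> lb <= \sum_v c v * x v) ->
  exists2 x, all (satisfies x) L &
    forall y, all (satisfies y) L -> \sum_v c v * x v <= \sum_v c v * y v.
Proof.
move=> [x0 Lx0] Hlb; have [L1 L1E] := objective_values L c.
have F0 : all (fun a => a.2 <= a.1 * \sum_v c v * x0 v) L1 by apply/L1E; exists x0.
have Flb t : all (fun a => a.2 <= a.1 * t) L1 -> lb <= t.
  by move=> /L1E [x Lx <-]; apply: Hlb.
have [t [Ft tmin]] := halfline_min F0 Flb.
have [x Lx xt] := (L1E t).2 Ft; exists x => // y Ly.
by rewrite xt; apply: tmin; apply/L1E; exists y.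
Qed.

End LinearProgramming.

Section FractionalDomination.
Variables (R : realFieldType) (T : finType) (e : rel T).
Local Open Scope ring_scope.

Lemma frac_dominating_system :
  exists L : seq ({ffun T -> R} * R),
    forall x : T -> R, all (satisfies x) L <-> frac_dominating e x.
Proof.
pose ind (A : {set T}) : {ffun T -> R} := [ffun u => (u \in A)%:R].
have cval_ind A b x : cval (ind A, b) x = \sum_(u in A) x u.
  rewrite /cval [RHS]big_mkcond; apply: eq_bigr => u _; rewrite ffunE.
  by case: (u \in A); rewrite ?mul1r ?mul0r.
have cval_neg A b x : cval ([ffun u => - ind A u], b) x = - \sum_(u in A) x u.
  by rewrite -(cval_ind A b) /cval -sumrN; apply: eq_bigr => u _; rewrite ffunE mulNr.
exists ([seq (ind [set v], 0) | v <- index_enum T] ++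
        [seq ([ffun u => - ind [set v] u], -1) | v <- index_enum T] ++
        [seq (ind (cnbhd e v), 1) | v <- index_enum T]) => x.
rewrite !all_cat !all_map; split.
  move=> /and3P [/allP x0 /allP x1 /allP dom].
  split=> v; have vT := mem_index_enum v.
    have := x0 v vT; have := x1 v vT; rewrite /= /satisfies cval_ind cval_neg big_set1.
    by rewrite lerN2 => -> ->.
  by have := dom v vT; rewrite /= /satisfies cval_ind.
move=> [x01 dom]; apply/and3P; split; apply/allP => v _; rewrite /= /satisfies.
- by rewrite cval_ind big_set1; case/andP: (x01 v).
- by rewrite cval_neg big_set1 lerN2; case/andP: (x01 v).
- by rewrite cval_ind.
Qed.

Lemma gamma_f_spec : is_gamma_f e (gamma_f e R).
Proof.
rewrite /gamma_f; apply: epsilon_spec.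
have [L LE] := frac_dominating_system.
have [|y Ly|x Lx xmin] := @lp_min _ _ L (fun=> 1) 0.
- exists (fun=> 1); apply/LE; split=> v; first by rewrite ler01 lexx.
  by rewrite (bigD1 v) ?cnbhd_id //= lerDl sumr_ge0.
- apply: sumr_ge0 => v _; rewrite mul1r; have [y01 _] := (LE y).1 Ly.
  by case/andP: (y01 v).
exists (\sum_v x v); split; first by exists x; split => //; apply/LE.
move=> f /LE Lf; have := xmin f Lf.
by under eq_bigr do rewrite mul1r; under [X in _ <= X]eq_bigr do rewrite mul1r.
Qed.

End FractionalDomination.

(** * Neighbourhoods in the strong product *)

Section StrongProduct.
Variables (T U : finType) (g : rel T) (h : rel U).
Local Notation gh := (strong_prod g h).

Lemma cnbhd_strong s : cnbhd gh s = setX (cnbhd g s.1) (cnbhd h s.2).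
Proof.
case: s => a b; apply/setP => -[x y]; rewrite in_setX !in_cnbhd /strong_prod /=.
case: (eqVneq (x, y) (a, b)) => [[-> ->] | ne]; first by rewrite !eqxx.
by rewrite (eq_sym a) (eq_sym b).
Qed.

Lemma onbhd_strong_disjoint_fst s t :
  [disjoint cnbhd g s.1 & cnbhd g t.1] -> [disjoint onbhd gh s & onbhd gh t].
Proof.
move=> st; apply: disjointW (onbhd_sub_cnbhd _ _) (onbhd_sub_cnbhd _ _) _.
by rewrite !cnbhd_strong; apply: disjoint_setXl.
Qed.

Hypothesis hirr : irreflexive h.

Lemma onbhd_strong_fibre s : setX [set s.1] (onbhd h s.2) \subset onbhd gh s.
Proof.
case: s => a b; apply/subsetP => -[x y]; rewrite in_setX in_set1 !in_onbhd /strong_prod /=.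
move=> /andP [/eqP -> hy]; rewrite eqxx hy orbT !andbT xpair_eqE eqxx /=.
by apply: contraTneq hy => ->; rewrite hirr.
Qed.

Lemma onbhd_strong_isolated s :
  ~~ nonisolated g s.1 -> onbhd gh s = setX [set s.1] (onbhd h s.2).
Proof.
case: s => a b /= iso; apply/eqP; rewrite eqEsubset (onbhd_strong_fibre (a, b)) andbT.
apply/subsetP => -[x y]; rewrite in_onbhd in_setX in_set1 in_onbhd /strong_prod /=.
rewrite (isolated_adjF x iso) orbF xpair_eqE => /and3P [ne /eqP ax hy]; subst x.
by rewrite eqxx; case/orP: hy ne => [/eqP <- | -> //]; rewrite !eqxx.
Qed.

Lemma open_packing_fibre (S : {set T * U}) x :
  is_open_packing gh S -> is_open_packing h [set s.2 | s in S & s.1 == x].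
Proof.
move=> /is_open_packingP PS; apply/is_open_packingP => _ _ /imsetP [s + ->] /imsetP [t + ->].
rewrite !inE => /andP [sS /eqP sx] /andP [tS /eqP tx] st.
have s_t : s != t by apply: contraNneq st => ->.
apply/disjoint_memP => z zs zt.
have /disjoint_memP/(_ (x, z)) := PS _ _ sS tS s_t; apply.
  by apply: (subsetP (onbhd_strong_fibre s)); rewrite sx in_setX in_set1 eqxx.
by apply: (subsetP (onbhd_strong_fibre t)); rewrite tx in_setX in_set1 eqxx.
Qed.

Lemma onbhd_strong_disjoint_isolated_fibre s t :
  s.1 = t.1 -> ~~ nonisolated g s.1 -> [disjoint onbhd h s.2 & onbhd h t.2] ->
  [disjoint onbhd gh s & onbhd gh t].
Proof.
move=> st iso; rewrite !onbhd_strong_isolated -?st //; exact: disjoint_setXr.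
Qed.

End StrongProduct.

Definition swap {T U : Type} (s : T * U) : U * T := (s.2, s.1).

Lemma swapK (T U : Type) : cancel (@swap T U) swap.
Proof. by case. Qed.

Section StrongProductSwap.
Variables (T U : finType) (g : rel T) (h : rel U).
Local Notation gh := (strong_prod g h).
Local Notation hg := (strong_prod h g).

Lemma strong_prod_swap s w : hg (swap s) (swap w) = gh s w.
Proof.
case: s w => [a b] [c d]; rewrite /strong_prod /swap /= !xpair_eqE.
by case: (a == c); case: (b == d); case: (g a c); case: (h b d).
Qed.

Lemma onbhd_strong_swap s : onbhd hg (swap s) = swap @: onbhd gh s.
Proof.
apply/setP => w; rewrite -[w]swapK mem_imset ?in_onbhd ?strong_prod_swap //.
exact: can_inj (@swapK T U).
Qed.

Lemma disjoint_onbhd_strong_swap s t :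
  [disjoint onbhd hg (swap s) & onbhd hg (swap t)] = [disjoint onbhd gh s & onbhd gh t].
Proof. by rewrite !onbhd_strong_swap imset_disjoint //; exact: can_inj (@swapK T U). Qed.

Lemma open_packing_swap (S : {set T * U}) :
  is_open_packing gh S -> is_open_packing hg (swap @: S).
Proof.
move=> /is_open_packingP PS; apply/is_open_packingP => _ _ /imsetP [s sS ->] /imsetP [t tS ->] st.
by rewrite disjoint_onbhd_strong_swap; apply: PS => //; apply: contraNneq st => ->.
Qed.

Lemma onbhd_strong_disjoint_snd s t :
  [disjoint cnbhd h s.2 & cnbhd h t.2] -> [disjoint onbhd gh s & onbhd gh t].
Proof. by move=> st; rewrite -disjoint_onbhd_strong_swap; apply: onbhd_strong_disjoint_fst. Qed.

Lemma open_packing_setX (P : {set T}) (Q : {set U}) :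
  is_packing g P -> is_packing h Q -> is_open_packing gh (setX P Q).
Proof.
move=> /is_packingP PP /is_packingP PQ; apply/is_open_packingP => -[a b] [c d].
rewrite !in_setX => /andP [aP bQ] /andP [cP dQ] st.
have [ac | ac] := eqVneq a c.
  by apply: onbhd_strong_disjoint_snd; apply: PQ => //; apply: contraNneq st => /= ->; rewrite ac.
by apply: onbhd_strong_disjoint_fst; apply: PP.
Qed.

Hypothesis girr : irreflexive g.

Lemma open_packing_fibre_snd (S : {set T * U}) y :
  is_open_packing gh S -> is_open_packing g [set s.1 | s in S & s.2 == y].
Proof.
move=> /open_packing_swap /(open_packing_fibre girr y); apply: open_packingS.
apply/subsetP => _ /imsetP [s /[!inE] /andP [sS sy] ->]; apply/imsetP; exists (swap s) => //.
by rewrite inE mem_imset ?sS //; exact: can_inj (@swapK T U).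
Qed.

Lemma onbhd_strong_disjoint_isolated_fibre_snd s t :
  s.2 = t.2 -> ~~ nonisolated h s.2 -> [disjoint onbhd g s.1 & onbhd g t.1] ->
  [disjoint onbhd gh s & onbhd gh t].
Proof.
move=> st iso D; rewrite -disjoint_onbhd_strong_swap.
exact: (onbhd_strong_disjoint_isolated_fibre girr).
Qed.

End StrongProductSwap.

Lemma rho_o_strong_prodC (T U : finType) (g : rel T) (h : rel U) :
  rho_o (strong_prod h g) = rho_o (strong_prod g h).
Proof.
have le (T' U' : finType) (g' : rel T') (h' : rel U') :
    (rho_o (strong_prod h' g') <= rho_o (strong_prod g' h'))%N.
  have [S [Sop _ <-]] := rho_o_witness (strong_prod h' g').
  rewrite -(card_imset _ (can_inj (@swapK U' T'))).
  exact/leq_rho_o/open_packing_swap.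
by apply/eqP; rewrite eqn_leq !le.
Qed.

(** * Lower bound *)

Section IsolatedCoordinate.
Variables (T U : finType) (g : rel T) (h : rel U).
Hypothesis gsym : symmetric g.
Local Notation gh := (strong_prod g h).

Lemma onbhd_strong_disjoint_isolated_fst s t :
  s.1 != t.1 -> ~~ nonisolated g s.1 || ~~ nonisolated g t.1 ->
  [disjoint onbhd gh s & onbhd gh t].
Proof.
have key x y : x != y -> ~~ nonisolated g x -> [disjoint cnbhd g x & cnbhd g y].
  move=> xy iso; rewrite cnbhd_isolated // disjoints1 in_cnbhd negb_or xy /=.
  by rewrite gsym isolated_adjF.
move=> st /orP [iso | iso]; apply: onbhd_strong_disjoint_fst; first exact: key.
by rewrite disjoint_sym key // eq_sym.
Qed.

End IsolatedCoordinate.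

Section StrongProductPackings.
Variables (T U : finType) (g : rel T) (h : rel U).
Hypotheses (gsym : symmetric g) (girr : irreflexive g).
Hypotheses (hsym : symmetric h) (hirr : irreflexive h).
Local Notation gh := (strong_prod g h).

Lemma onbhd_strong_disjoint_isolated_snd s t :
  s.2 != t.2 -> ~~ nonisolated h s.2 || ~~ nonisolated h t.2 ->
  [disjoint onbhd gh s & onbhd gh t].
Proof.
move=> st iso; rewrite -disjoint_onbhd_strong_swap.
exact: (onbhd_strong_disjoint_isolated_fst g hsym).
Qed.

Lemma onbhd_strong_disjoint_isolated s t :
  nonisolated g s.1 -> nonisolated h s.2 ->
  ~~ nonisolated g t.1 || ~~ nonisolated h t.2 ->
  [disjoint onbhd gh s & onbhd gh t].
Proof.
move=> ns1 ns2 /orP [it | it].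
  by apply: onbhd_strong_disjoint_isolated_fst; rewrite ?it ?orbT //; apply: contraNneq it => <-.
by apply: onbhd_strong_disjoint_isolated_snd; rewrite ?it ?orbT //; apply: contraNneq it => <-.
Qed.

Definition isolated_part (A : {set T}) (B : {set U}) : {set T * U} :=
  [set s in setX A B | ~~ nonisolated g s.1 || ~~ nonisolated h s.2].

Lemma open_packing_isolated_part (A : {set T}) (B : {set U}) :
  is_open_packing g A -> is_open_packing h B -> is_open_packing gh (isolated_part A B).
Proof.
move=> /is_open_packingP PA /is_open_packingP PB; apply/is_open_packingP => -[a b] [c d].
rewrite !in_set /= => /andP [/andP [aA bB] iab] /andP [/andP [cA dB] icd] st.
have [ac | ac] := eqVneq a c.
  have bd : b != d by apply: contraNneq st => ->; rewrite ac.
  subst c; have [na | ia] := boolP (nonisolated g a).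
    by apply: onbhd_strong_disjoint_isolated_snd => //; move: iab; rewrite na /= => ->.
  exact: onbhd_strong_disjoint_isolated_fibre (PB _ _ bB dB bd).
have [ia | na] := boolP (~~ nonisolated g a || ~~ nonisolated g c).
  exact: onbhd_strong_disjoint_isolated_fst.
move: na; rewrite negb_or !negbK => /andP [na nc]; rewrite na /= in iab; rewrite nc /= in icd.
have [bd | bd] := eqVneq b d; last by apply: onbhd_strong_disjoint_isolated_snd => //=; rewrite iab.
by subst d; apply: onbhd_strong_disjoint_isolated_fibre_snd => //; apply: PA.
Qed.

Lemma card_isolated_part (A : {set T}) (B : {set U}) :
  isolated_vertices g \subset A -> isolated_vertices h \subset B ->
  (#|isolated_part A B| + num_isolated g * num_isolated h =
   num_isolated g * #|B| + #|A| * num_isolated h)%N.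
Proof.
move=> /subsetP IA /subsetP IB; rewrite -!card_isolated_vertices -!cardsX.
have -> : isolated_part A B =
    setX (isolated_vertices g) B :|: setX A (isolated_vertices h).
  apply/setP => -[x y]; rewrite !in_set /=.
  case: (boolP (nonisolated g x)) => gx; case: (boolP (nonisolated h y)) => hy //=.
  - by rewrite !andbF.
  - by rewrite (IB y) ?in_set // !andbT.
  - by rewrite (IA x) ?in_set //= andbF orbF andbT.
  - by rewrite (IA x) ?(IB y) ?in_set.
rewrite -cardsUI; congr (_ + _)%N; apply: eq_card => -[x y]; rewrite !in_set /=.
by case: (boolP (nonisolated g x)) => gx; case: (boolP (nonisolated h y)) => hy;
  rewrite ?andbF //= ?IA ?IB ?in_set.
Qed.

End StrongProductPackings.

Section LowerBound.
Variables (T U : finType) (g : rel T) (h : rel U).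
Hypotheses (gsym : symmetric g) (girr : irreflexive g).
Hypotheses (hsym : symmetric h) (hirr : irreflexive h).

Lemma rho_o_strong_lower :
  (rho (minus_rel g) * rho (minus_rel h) + num_isolated g * rho_o h +
   num_isolated h * rho_o g <= rho_o (strong_prod g h) + num_isolated g * num_isolated h)%N.
Proof.
have [P [PP Pn <-]] := rho_minus_witness gsym.
have [Q [QQ Qn <-]] := rho_minus_witness hsym.
have [OG [OGP IOG <-]] := rho_o_witness g.
have [OH [OHP IOH <-]] := rho_o_witness h.
have PQ_iso : [disjoint setX P Q & isolated_part g h OG OH].
  apply/disjoint_memP => -[x y] /[!in_set] /= /andP [xP yQ] /andP [_].
  by rewrite Pn ?Qn.
have Sop : is_open_packing (strong_prod g h) (setX P Q :|: isolated_part g h OG OH).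
  apply: open_packingU; first exact: open_packing_setX.
    exact: open_packing_isolated_part.
  move=> s t /[!in_set] /andP [sP sQ] /andP [_ it].
  exact: onbhd_strong_disjoint_isolated (Pn _ sP) (Qn _ sQ) it.
have cS := cardsUI (setX P Q) (isolated_part g h OG OH).
rewrite (disjoint_setI0 PQ_iso) cards0 addn0 cardsX in cS.
rewrite -addnA [(num_isolated h * _)%N]mulnC -(card_isolated_part IOG IOH).
by rewrite addnA leq_add2r -cS; apply: leq_rho_o.
Qed.

End LowerBound.

(** * Upper bound *)

Lemma card_sep (T : finType) (S : {set T}) (P : pred T) :
  (#|[set x in S | P x]| + #|[set x in S | ~~ P x]|)%N = #|S|.
Proof.
rewrite -(cardsID [set x | P x] S); congr (_ + _)%N; apply: eq_card => x.
  by rewrite !inE.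
by rewrite !inE andbC.
Qed.

Section StrongProductCommonNeighbours.
Variables (T U : finType) (g : rel T) (h : rel U).
Hypotheses (gsym : symmetric g) (girr : irreflexive g) (hirr : irreflexive h).
Local Notation gh := (strong_prod g h).

Lemma strong_adjacent_not_disjoint s t :
  s != t -> s \in cnbhd gh t -> nonisolated g s.1 -> nonisolated h s.2 ->
  ~~ [disjoint onbhd gh s & onbhd gh t].
Proof.
case: s t => [a b] [c d]; rewrite cnbhd_strong in_setX !in_cnbhd /= => st /andP [ac bd].
move=> /existsP [a' aa'] /existsP [b' bb'].
suff [w sw tw] : exists2 w, gh (a, b) w & gh (c, d) w.
  by apply/negP => /disjoint_memP /(_ w); apply; rewrite in_onbhd.
have a'a : a' != a by apply: contraTneq aa' => ->; rewrite girr.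
have b'b : b' != b by apply: contraTneq bb' => ->; rewrite hirr.
(* The common neighbour is (a', b) if a = c, (a, b') if b = d, and (c, b) otherwise. *)
rewrite /strong_prod /=.
have [ca | ca] := eqVneq c a.
  subst c; exists (a', b); rewrite !xpair_eqE (eq_sym a) (negbTE a'a) aa' ?eqxx //=.
  by rewrite eq_sym.
have [db | db] := eqVneq d b.
  subst d; exists (a, b'); rewrite !xpair_eqE (eq_sym b) (negbTE b'b) bb' !orbT ?eqxx //=.
  by rewrite andbF andbT /= eq_sym.
move: ac bd; rewrite [a == c]eq_sym [b == d]eq_sym (negbTE ca) (negbTE db) /= => ca' db'.
exists (c, b); rewrite !xpair_eqE /=.
  by rewrite (eq_sym a) (negbTE ca) gsym ca' eqxx.
by rewrite (negbTE db) db' eqxx andbF.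
Qed.

Lemma strong_common_cnbhd_not_disjoint s t w :
  s != t -> w \in cnbhd gh s -> w \in cnbhd gh t ->
  nonisolated g s.1 -> nonisolated g t.1 -> nonisolated h w.2 ->
  ~~ [disjoint onbhd gh s & onbhd gh t].
Proof.
move=> st ws wt ns nt nw.
have [ew | wns] := eqVneq w s; first by subst w; exact: strong_adjacent_not_disjoint.
have [ew | wnt] := eqVneq w t.
  by subst w; rewrite disjoint_sym strong_adjacent_not_disjoint // eq_sym.
apply/negP => /disjoint_memP /(_ w); apply; rewrite in_onbhd.
  by move: ws; rewrite in_cnbhd (negbTE wns).
by move: wt; rewrite in_cnbhd (negbTE wnt).
Qed.

Lemma card_cnbhd_snd_leq_rho (S : {set T * U}) y :
  is_open_packing gh S -> {in S, forall s, nonisolated g s.1} -> nonisolated h y ->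
  (#|[set s in S | y \in cnbhd h s.2]| <= rho (minus_rel g))%N.
Proof.
move=> /is_open_packingP PS Sn ny; set B := [set s in S | _].
have sep s t x : s \in B -> t \in B -> s != t ->
    x \in cnbhd g s.1 -> x \in cnbhd g t.1 -> False.
  rewrite !inE => /andP [sS ys] /andP [tS yt] st xs xt.
  move: (PS _ _ sS tS st); apply/negP.
  apply: (strong_common_cnbhd_not_disjoint (w := (x, y))) => //; try exact: Sn.
    by rewrite cnbhd_strong in_setX !in_cnbhd xs ys.
  by rewrite cnbhd_strong in_setX !in_cnbhd xt yt.
have inj : {in B &, injective fst}.
  move=> s t sB tB st; apply/eqP/negPn/negP => /(sep s t s.1 sB tB); apply.
    exact: cnbhd_id.
  by rewrite st cnbhd_id.
rewrite -(card_in_imset inj); apply: leq_rho_minus.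
  by move=> _ /imsetP [s /[!inE] /andP [sS _] ->]; exact: Sn.
apply/is_packingP => _ _ /imsetP [s sB ->] /imsetP [t tB ->] st.
by apply/disjoint_memP => x; apply: sep => //; apply: contraNneq st => ->.
Qed.

End StrongProductCommonNeighbours.

Section UpperBound.
Variables (T U : finType) (g : rel T) (h : rel U).
Hypotheses (girr : irreflexive g) (hirr : irreflexive h).
Local Notation gh := (strong_prod g h).

Lemma card_isolated_fst (S : {set T * U}) :
  is_open_packing gh S ->
  (#|[set s in S | ~~ nonisolated g s.1]| <= num_isolated g * rho_o h)%N.
Proof.
move=> Sop; have -> : [set s in S | ~~ nonisolated g s.1] =
    [set s in S | s.1 \in isolated_vertices g] by apply/setP => s; rewrite !in_set.
rewrite card_fibres -card_isolated_vertices -sum_nat_const; apply: leq_sum => x _.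
rewrite -(card_in_imset (f := snd)); first exact: leq_rho_o (open_packing_fibre hirr x Sop).
by move=> [a b] [c d] /[!in_set] /= /andP [_ /eqP ->] /andP [_ /eqP ->] ->.
Qed.

Lemma card_isolated_snd (S : {set T * U}) :
  is_open_packing gh S -> {in S, forall s, nonisolated g s.1} ->
  (#|[set s in S | ~~ nonisolated h s.2]| + num_isolated h * num_isolated g
     <= num_isolated h * rho_o g)%N.
Proof.
move=> Sop Sn; have -> : [set s in S | ~~ nonisolated h s.2] =
    [set s in S | s.2 \in isolated_vertices h] by apply/setP => s; rewrite !in_set.
rewrite card_fibres -card_isolated_vertices -!sum_nat_const -big_split /=.
apply: leq_sum => y _; set Y := [set s.1 | s in S & s.2 == y].
have YP : is_open_packing g Y := open_packing_fibre_snd girr y Sop.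
have YI : [disjoint Y & isolated_vertices g].
  apply/disjoint_memP => _ /imsetP [s /[!in_set] /andP [sS _] ->].
  by rewrite (Sn _ sS).
rewrite -(card_in_imset (f := fst)); last first.
  by move=> [a b] [c d] /[!in_set] /= /andP [_ /eqP ->] /andP [_ /eqP ->] ->.
have := leq_rho_o (open_packingU_isolated YP).
by rewrite -cardsUI (disjoint_setI0 YI) cards0 addn0.
Qed.

Lemma rho_o_strong_upper_nat (S : {set T * U}) :
  is_open_packing gh S ->
  (#|S| + num_isolated g * num_isolated h <=
   #|[set s in S | nonisolated g s.1 && nonisolated h s.2]| +
   num_isolated g * rho_o h + num_isolated h * rho_o g)%N.
Proof.
move=> Sop; set S' := [set s in S | nonisolated g s.1].
have S'op : is_open_packing gh S'.
  by apply: open_packingS Sop; apply/subsetP => s; rewrite in_set => /andP [].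
have S'n : {in S', forall s, nonisolated g s.1} by move=> s; rewrite in_set => /andP [].
have := card_isolated_snd S'op S'n; have := card_isolated_fst Sop.
rewrite -(card_sep S (fun s => nonisolated g s.1)) -(card_sep S' (fun s => nonisolated h s.2)).
have -> : [set s in S' | nonisolated h s.2] =
    [set s in S | nonisolated g s.1 && nonisolated h s.2].
  by apply/setP => s; rewrite !in_set andbA.
rewrite [(num_isolated h * num_isolated g)%N]mulnC; lia.
Qed.

End UpperBound.

Local Open Scope ring_scope.

Lemma card_open_packing_leq_frac (R : realFieldType) (T U : finType) (g : rel T) (h : rel U)
  (gsym : symmetric g) (girr : irreflexive g) (hirr : irreflexive h)
  (S : {set T * U}) (f : minus_vert h -> R) :
  is_open_packing (strong_prod g h) S ->
  {in S, forall s, nonisolated g s.1 && nonisolated h s.2} ->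
  frac_dominating (minus_rel h) f ->
  #|S|%:R <= (rho (minus_rel g))%:R * \sum_u f u.
Proof.
move=> Sop Sn [f01 fdom].
have dom s : s \in S -> 1 <= \sum_(u | val u \in cnbhd h s.2) f u.
  move=> sS; have /andP [_ ns2] := Sn _ sS.
  rewrite (eq_bigl (fun u => u \in cnbhd (minus_rel h) (exist _ s.2 ns2))) ?fdom // => u.
  by rewrite !in_cnbhd -val_eqE.
have : #|S|%:R <= \sum_(s in S) \sum_(u | val u \in cnbhd h s.2) f u.
  by rewrite -sumr_const; apply: ler_sum.
move/le_trans; apply.
rewrite (exchange_big_dep xpredT) //= mulr_sumr; apply: ler_sum => u _.
rewrite sumr_const -[_ *+ _]mulr_natr [X in _ <= X]mulrC.
apply: ler_wpM2l; first by case/andP: (f01 u).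
have Sn1 : {in S, forall s, nonisolated g s.1} by move=> s /Sn /andP [].
rewrite ler_nat; apply: leq_trans (card_cnbhd_snd_leq_rho gsym girr hirr Sop Sn1 (valP u)).
by apply: subset_leq_card; apply/subsetP => s; rewrite in_set unfold_in.
Qed.

Lemma rho_o_strong_upper (R : realFieldType) (T U : finType) (g : rel T) (h : rel U)
  (gsym : symmetric g) (girr : irreflexive g) (hirr : irreflexive h) :
  (rho_o (strong_prod g h))%:R + (num_isolated g * num_isolated h)%:R <=
  (rho (minus_rel g))%:R * gamma_f (minus_rel h) R +
  (num_isolated g * rho_o h)%:R + (num_isolated h * rho_o g)%:R :> R.
Proof.
have [S [Sop _ <-]] := rho_o_witness (strong_prod g h).
have := rho_o_strong_upper_nat girr hirr Sop.
set S1 := [set s in S | _] => up.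
have S1op : is_open_packing (strong_prod g h) S1.
  by apply: open_packingS Sop; apply/subsetP => s; rewrite in_set => /andP [].
have S1n : {in S1, forall s, nonisolated g s.1 && nonisolated h s.2}.
  by move=> s; rewrite in_set => /andP [].
have [[f [fdom <-]] _] := gamma_f_spec R (minus_rel h).
have := card_open_packing_leq_frac gsym girr hirr S1op S1n fdom.
rewrite -(ler_nat R) !natrD in up; lra.
Qed.

Unset Implicit Arguments.

Theorem mainTheorem11 (R : realFieldType) (T U : finType) (g : rel T) (h : rel U)
  (gsym : symmetric g) (girr : irreflexive g)
  (hsym : symmetric h) (hirr : irreflexive h) :
  let iG := num_isolated g in
  let iH := num_isolated h in
  let lhs : R := (rho_o (strong_prod g h))%:R in
  let rest : R := ((iG * rho_o h)%N%:R + (iH * rho_o g)%N%:R - (iG * iH)%N%:R)%R in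
  ((rho (minus_rel g) * rho (minus_rel h))%N%:R + rest <= lhs)%R /\
  (lhs <= Num.min ((rho (minus_rel g))%:R * gamma_f (minus_rel h) R)
                  ((rho (minus_rel h))%:R * gamma_f (minus_rel g) R) + rest)%R.
Proof.
move=> iG iH lhs rest; rewrite /lhs /rest /iG /iH.
have low := rho_o_strong_lower gsym girr hsym hirr.
have up_gh := rho_o_strong_upper R gsym girr hirr.
have up_hg := rho_o_strong_upper R hsym hirr girr.
rewrite rho_o_strong_prodC mulnC [(num_isolated h * _)%N]mulnC in up_hg.
rewrite -(ler_nat R) !natrD in low.
split; first lra.
by rewrite -lerBlDr le_min; apply/andP; split; lra.
Qed.
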